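(* Let $\mathcal{D}\subseteq\mathbb{R}^n$, let $f_{\mathrm{cl}}:\mathcal{D}\to\mathbb{R}^n$ be locally Lipschitz, and let $h:\mathcal{D}\to\mathbb{R}$ be locally Lipschitz with $h(\mathcal{D})\subseteq[h_{\min},h_{\max}]$ for some constants $h_{\min}<0<h_{\max}$. Let $S=\{x\in\mathcal{D}: h(x)\ge 0\}$. For a function $\alpha:\mathbb{R}\to\mathbb{R}$, say that the barrier condition holds with $\alpha$ if $$\sup_{\zeta\in\partial^C h(x)}\zeta^\top f_{\mathrm{cl}}(x)\;\ge\;-\alpha\big(h(x)\big)\qquad\text{for all }x\in\mathcal{D}.$$ Then the following are equivalent: (a) There exists an extended class-$\mathcal{K}_\infty$ function $\alpha$ satisfying the one-sided slope bounds $$\limsup_{s\downarrow 0}\frac{\alpha(s)}{s}<\infty,\qquad \liminf_{s\uparrow 0}\frac{\alpha(s)}{s}>0,$$ such that the barrier condition holds with $\alpha$. (b) There exist constants $0<\alpha_1\le\alpha_m<\infty$ such that the barrier condition holds with the Leaky-ReLU function $$\overline{\alpha}(s)=\begin{cases}\alpha_m s,& s\ge 0,\\ \alpha_1 s,& s<0.\end{cases}$$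
   Context: $\partial^C h(x)$ denotes the Clarke generalized gradient of $h$ at $x$ (which reduces to $\{\nabla h(x)\}$ where $h$ is continuously differentiable). An extended class-$\mathcal{K}_\infty$ function is a continuous, strictly increasing function $\alpha:\mathbb{R}\to\mathbb{R}$ with $\alpha(0)=0$ and $\alpha(s)\to\pm\infty$ as $s\to\pm\infty$. *)

From HB Require Import structures.
From mathcomp Require Import all_boot all_order all_algebra.
From mathcomp Require Import all_classical all_reals all_analysis.
Set Implicit Arguments. Unset Strict Implicit. Unset Printing Implicit Defensive.
Import Order.TTheory GRing.Theory Num.Theory.
Import numFieldNormedType.Exports.
Local Open Scope classical_set_scope.
Local Open Scope ring_scope.

(* Vectors of R^n are row vectors 'rV[R]_n (with the library's max-norm). *)
Definition dotv (R : realType) (n : nat) (u v : 'rV[R]_n) : R :=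
  \sum_(i < n) u ord0 i * v ord0 i.

Definition locally_lipschitz_on (R : realType) (n m : nat)
  (D : set 'rV[R]_n) (f : 'rV[R]_n -> 'rV[R]_m) : Prop :=
  forall x, D x -> exists r : R, 0 < r /\ exists L : R,
    forall y z, D y -> D z -> `|y - x| < r -> `|z - x| < r ->
      `|f y - f z| <= L * `|y - z|.

Definition locally_lipschitz_on_R (R : realType) (n : nat)
  (D : set 'rV[R]_n) (h : 'rV[R]_n -> R) : Prop :=
  forall x, D x -> exists r : R, 0 < r /\ exists L : R,
    forall y z, D y -> D z -> `|y - x| < r -> `|z - x| < r ->
      `|h y - h z| <= L * `|y - z|.

Definition clarke_dd (R : realType) (n : nat) (h : 'rV[R]_n -> R)
  (x v : 'rV[R]_n) : \bar R :=
  limf_esup (fun p : 'rV[R]_n * R => ((h (p.1 + p.2 *: v) - h p.1) / p.2)%:E)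
            (filter_prod (nbhs x) (0^'+)).

Definition clarke_grad (R : realType) (n : nat) (h : 'rV[R]_n -> R)
  (x : 'rV[R]_n) : set 'rV[R]_n :=
  [set zeta | forall v, ((dotv zeta v)%:E <= clarke_dd h x v)%E].

Definition barrier_condition (R : realType) (n : nat) (D : set 'rV[R]_n)
  (f : 'rV[R]_n -> 'rV[R]_n) (h : 'rV[R]_n -> R) (alpha : R -> R) : Prop :=
  forall x, D x ->
    ((- alpha (h x))%:E <= ereal_sup [set (dotv zeta (f x))%:E | zeta in clarke_grad h x])%E.

Definition ext_class_Kinf (R : realType) (alpha : R -> R) : Prop :=
  continuous alpha /\ {mono alpha : s t / s < t} /\ alpha 0 = 0 /\
  alpha @ +oo --> +oo /\ alpha @ -oo --> -oo.

Definition leaky_relu (R : realType) (a1 am : R) (s : R) : R :=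
  if 0 <= s then am * s else a1 * s.

From HB Require Import structures.
From mathcomp Require Import all_boot all_order all_algebra.
From mathcomp Require Import all_classical all_reals all_analysis.
From mathcomp Require Import lra.
Import Order.TTheory GRing.Theory Num.Theory.
Import numFieldNormedType.Exports.
Local Open Scope classical_set_scope.
Local Open Scope ring_scope.

(* The barrier condition only involves alpha on the range of h, and it gets
   weaker as alpha grows.  Since h takes values in [hmin, hmax], an increasing
   alpha with finite right slope and positive left slope at 0 is dominated
   there by a Leaky-ReLU: near 0 by the slope bounds, away from 0 by
   monotonicity and the values alpha hmax and alpha (- e).  Conversely a
   Leaky-ReLU is an extended class-K_infinity function with slopes alpham and
   alpha1 at 0. *)

Section limf_bounds.
Context {T : choiceType} {X : filteredType T} {R : realType}.
Context (F : set_system X) {FF : Filter F}.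
Local Open Scope ereal_scope.

Lemma limf_esup_lty_ub (g : X -> R) :
  limf_esup (fun x => (g x)%:E) F < +oo ->
  exists M : R, \forall x \near F, (g x <= M)%R.
Proof.
rewrite limf_esupE => /ereal_inf_lt[_ [V FV <-]].
set S := [set (g x)%:E | x in V] => supS.
have ubS x : V x -> (g x)%:E <= ereal_sup S.
  by move=> Vx; apply: ereal_sup_ubound; exists x.
case: (ereal_sup S) supS ubS => [M| |] // _ ubS.
- by exists M; apply: filterS FV => x /ubS; rewrite lee_fin.
- by exists 0%R; apply: filterS FV => x /ubS; rewrite leeNy_eq.
Qed.

Lemma limf_einf_gt_lb (g : X -> R) (r : R) :
  r%:E < limf_einf (fun x => (g x)%:E) F ->
  exists2 m : R, (r < m)%R & \forall x \near F, (m <= g x)%R.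
Proof.
rewrite limf_einfE => /ereal_sup_gt[_ [V FV <-]].
set S := [set (g x)%:E | x in V] => rinfS.
have lbS x : V x -> ereal_inf S <= (g x)%:E.
  by move=> Vx; apply: ereal_inf_lbound; exists x.
case: (ereal_inf S) rinfS lbS => [m| |] // rm lbS.
- by exists m; [rewrite -lte_fin | apply: filterS FV => x /lbS; rewrite lee_fin].
- exists (r + 1)%R; first by rewrite ltrDl.
  by apply: filterS FV => x /lbS; rewrite leye_eq.
Qed.

Lemma limf_esup_le (g : X -> R) (M : R) :
  (\forall x \near F, (g x <= M)%R) -> limf_esup (fun x => (g x)%:E) F <= M%:E.
Proof.
move=> gM; rewrite limf_esupE; apply: (@le_trans _ _ (ereal_sup
    [set (g x)%:E | x in [set x | (g x <= M)%R]])).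
  by apply: ereal_inf_lbound; exists [set x | (g x <= M)%R].
by apply: ge_ereal_sup => _ [x /= gxM <-]; rewrite lee_fin.
Qed.

Lemma limf_einf_ge (g : X -> R) (m : R) :
  (\forall x \near F, (m <= g x)%R) -> m%:E <= limf_einf (fun x => (g x)%:E) F.
Proof.
move=> gm; rewrite limf_einfE; apply: (@le_trans _ _ (ereal_inf
    [set (g x)%:E | x in [set x | (m <= g x)%R]])); last first.
  by apply: ereal_sup_ubound; exists [set x | (m <= g x)%R].
by apply: le_ereal_inf_tmp => _ [x /= mgx <-]; rewrite lee_fin.
Qed.

End limf_bounds.

Section slopes_at_zero.
Context {R : realType}.
Implicit Types (alpha : R -> R) (P : set R).

Lemma near_at_right0_itv P : (\forall s \near 0^'+, P s) ->
  exists2 e : R, 0 < e & forall s, 0 < s -> s < e -> P s.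
Proof.
move=> /nbhs_ballP[e e0 He]; exists e => // s s0 se; apply: He => //.
by rewrite /ball /= sub0r normrN gtr0_norm.
Qed.

Lemma near_at_left0_itv P : (\forall s \near 0^'-, P s) ->
  exists2 e : R, 0 < e & forall s, s < 0 -> - e < s -> P s.
Proof.
move=> /nbhs_ballP[e e0 He]; exists e => // s s0 se; apply: He => //.
by rewrite /ball /= sub0r normrN ltr0_norm // ltrNl.
Qed.

Lemma nondecreasing_le_linear_right {alpha} {M : R} (b : R) :
  {homo alpha : s t / s <= t} -> alpha 0 = 0 ->
  (\forall s \near 0^'+, alpha s / s <= M) ->
  exists c : R, forall s, 0 <= s <= b -> alpha s <= c * s.
Proof.
move=> incr a0 /near_at_right0_itv[e e0 slope].
set q := alpha b / e; set c := Num.max M q.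
have cM : M <= c by rewrite le_max lexx.
have cq : q <= c by rewrite le_max lexx orbT.
exists c => s /andP[s0 sb].
have [->|s_neq0] := eqVneq s 0; first by rewrite a0 mulr0.
have {s_neq0}s_gt0 : 0 < s by rewrite lt_neqAle eq_sym s_neq0.
have [se|es] := ltP s e.
- by have := slope s s_gt0 se; rewrite ler_pdivrMr // => ?; nra.
- have alpha_b0 : 0 <= alpha b by rewrite -a0; apply/incr/(le_trans s0).
  have q0 : 0 <= q := divr_ge0 alpha_b0 (ltW e0).
  have qe : q * e = alpha b by rewrite /q divfK ?gt_eqF.
  by have := incr _ _ sb; nra.
Qed.

Lemma increasing_le_linear_left {alpha} {a m : R} :
  {homo alpha : s t / s < t} -> alpha 0 = 0 -> a < 0 -> 0 < m ->
  (\forall s \near 0^'-, m <= alpha s / s) ->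
  exists2 c : R, 0 < c & forall s, a <= s <= 0 -> alpha s <= c * s.
Proof.
move=> incr a0 a_lt0 m0 /near_at_left0_itv[e e0 slope].
have alpha_e : alpha (- e) < 0 by rewrite -a0 incr ?oppr_lt0.
set r := alpha (- e) / a.
have rE : r * a = alpha (- e) by rewrite /r divfK ?lt_eqF.
have r0 : 0 < r by rewrite /r ltr_ndivlMr // mul0r.
exists (Num.min m r) => [|s /andP[a_s s0]]; first by rewrite lt_min m0 r0.
have [->|s_neq0] := eqVneq s 0; first by rewrite a0 mulr0.
have {s0 s_neq0}s_lt0 : s < 0 by rewrite lt_neqAle s_neq0.
have mr_m : Num.min m r <= m by rewrite ge_min lexx.
have mr_r : Num.min m r <= r by rewrite ge_min lexx orbT.
have [es|se] := ltP (- e) s.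
- by have := slope s s_lt0 es; rewrite ler_ndivlMr // => ?; nra.
- have := ltW_homo incr se; nra.
Qed.

Lemma leaky_relu_dominates {alpha} {a : R} (b : R) :
  {homo alpha : s t / s < t} -> alpha 0 = 0 -> a < 0 ->
  (limf_esup (fun s => (alpha s / s)%:E) (0^'+) < +oo)%E ->
  ((0%:E) < limf_einf (fun s => (alpha s / s)%:E) (0^'-))%E ->
  exists a1 am : R, [/\ 0 < a1, a1 <= am &
    forall s, a <= s <= b -> alpha s <= leaky_relu a1 am s].
Proof.
move=> incr a0 a_lt0 /limf_esup_lty_ub[M slopeM] /limf_einf_gt_lb[m m0 slopem].
have [cr right] := nondecreasing_le_linear_right b (ltW_homo incr) a0 slopeM.
have [cl cl0 left] := increasing_le_linear_left incr a0 a_lt0 m0 slopem.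
exists cl, (Num.max cr cl); split; rewrite ?le_max ?lexx ?orbT // => s /andP[a_s sb].
rewrite /leaky_relu; case: ifP => s0.
- apply: le_trans (right s _) _; first by rewrite s0.
  by rewrite ler_wpM2r // le_max lexx.
- by apply: left; rewrite a_s ltW // ltNge s0.
Qed.

Lemma leaky_relu_lipschitz {a1 am : R} (x y : R) : 0 < a1 -> a1 <= am ->
  `|leaky_relu a1 am x - leaky_relu a1 am y| <= am * `|x - y|.
Proof.
move=> a10 a1m; rewrite /leaky_relu ler_norml.
by have [xy|xy] := lerP x y; case: ifP => hx; case: ifP => hy;
  apply/andP; split; nra.
Qed.

Lemma leaky_relu_ext_class_Kinf (a1 am : R) : 0 < a1 -> a1 <= am ->
  ext_class_Kinf (leaky_relu a1 am).
Proof.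
move=> a10 a1m; have am0 : 0 < am by apply: lt_le_trans a1m.
split; [|split; [|split; [|split]]].
- move=> x; apply/cvgrPdist_le => eps e0.
  near=> y; apply: le_trans (leaky_relu_lipschitz x y a10 a1m) _.
  near: y; apply/nbhs_ballP; exists (eps / am) => /=; first exact: divr_gt0.
  by move=> y; rewrite /ball /= => Hy; rewrite mulrC -ler_pdivlMr // ltW.
- apply: leW_mono; apply: le_mono => s t st; rewrite /leaky_relu.
  by case: ifP => hs; case: ifP => ht; nra.
- by rewrite /leaky_relu lexx mulr0.
- apply/cvgryPge => A; exists (Num.max 0 (A / am)); split; first exact: num_real.
  move=> x; rewrite gt_max => /andP[x0 xA].
  by rewrite /leaky_relu (ltW x0) mulrC -ler_pdivrMr // ltW.
- apply/cvgrNyPle => A; exists (Num.min 0 (A / a1)); split; first exact: num_real.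
  move=> x; rewrite lt_min => /andP[x0 xA].
  by rewrite /leaky_relu (leNgt 0 x) x0 /= mulrC -ler_pdivlMr // ltW.
Unshelve. all: by end_near.
Qed.

Lemma leaky_relu_slope_right (a1 am : R) :
  (limf_esup (fun s => (leaky_relu a1 am s / s)%:E) (0^'+) <= am%:E)%E.
Proof.
apply: limf_esup_le; near=> s.
have s0 : 0 < s by near: s; exact: nbhs_right_gt.
by rewrite /leaky_relu (ltW s0) mulfK // gt_eqF.
Unshelve. all: by end_near.
Qed.

Lemma leaky_relu_slope_left (a1 am : R) :
  (a1%:E <= limf_einf (fun s => (leaky_relu a1 am s / s)%:E) (0^'-))%E.
Proof.
apply: limf_einf_ge; near=> s.
have s0 : s < 0 by near: s; exact: nbhs_left_lt.
by rewrite /leaky_relu (leNgt 0 s) s0 /= mulfK // lt_eqF.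
Unshelve. all: by end_near.
Qed.

End slopes_at_zero.

Lemma le_barrier_condition (R : realType) (n : nat) (D : set 'rV[R]_n)
    (f : 'rV[R]_n -> 'rV[R]_n) (h : 'rV[R]_n -> R) (alpha beta : R -> R) :
  (forall x, D x -> alpha (h x) <= beta (h x)) ->
  barrier_condition D f h alpha -> barrier_condition D f h beta.
Proof.
by move=> le_ab Balpha x Dx; apply: le_trans (Balpha x Dx);
  rewrite lee_fin lerN2 le_ab.
Qed.

Theorem theorem1 (R : realType) (n : nat) (D : set 'rV[R]_n)
  (f_cl : 'rV[R]_n -> 'rV[R]_n) (h : 'rV[R]_n -> R) (hmin hmax : R) :
  open D ->
  locally_lipschitz_on D f_cl ->
  locally_lipschitz_on_R D h ->
  hmin < 0 -> 0 < hmax ->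
  (forall x, D x -> hmin <= h x <= hmax) ->
  (exists alpha : R -> R,
      [/\ ext_class_Kinf alpha,
          (limf_esup (fun s => (alpha s / s)%:E) (0^'+) < +oo)%E,
          ((0%:E) < limf_einf (fun s => (alpha s / s)%:E) (0^'-))%E
        & barrier_condition D f_cl h alpha])
  <->
  (exists alpha1 alpham : R,
      [/\ 0 < alpha1, alpha1 <= alpham
        & barrier_condition D f_cl h (leaky_relu alpha1 alpham)]).
Proof.
move=> _ _ _ hmin0 _ h_range; split.
- move=> [alpha [[_ [incr [a0 _]]] slope_right slope_left Balpha]].
  have [a1 [am [a10 a1m dominated]]] :=
    leaky_relu_dominates hmax (mono2W incr) a0 hmin0 slope_right slope_left.
  exists a1, am; split => //; apply: le_barrier_condition Balpha.
  by move=> x Dx; apply/dominated/h_range.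
- move=> [a1 [am [a10 a1m Bleaky]]]; exists (leaky_relu a1 am); split => //.
  + exact: leaky_relu_ext_class_Kinf.
  + exact: le_lt_trans (leaky_relu_slope_right a1 am) (ltry _).
  + by apply: lt_le_trans (leaky_relu_slope_left a1 am); rewrite lte_fin.
Qed.
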